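(* Let $n\ge1$, let $a=(a_m)_{m\ge0}$, $b=(b_m)_{m\ge0}$ be complex sequences with $b_0=0$ and $b_m\ne0$ for $m\ge1$, and let $\omega(u)=\sum_{i=1}^n\tilde T_{ii}(u)$ in $OY(\mathfrak{gl}_n,a,b)[[u^{-1}]]$. Then $[\omega(u),\omega(v)]=0$, i.e. all coefficients of $\omega(u)$ pairwise commute.
   Context: $OY(\mathfrak{gl}_n,a,b)$ is the unital associative $\mathbb C$-algebra with generators $\tilde t^{(r)}_{ij}$ ($1\le i,j\le n$, $r\ge1$) and defining relations $[\tilde t^{(r+1)}_{ij}+a_r\tilde t^{(r)}_{ij}+b_r\tilde t^{(r-1)}_{ij},\tilde t^{(s)}_{kl}]-[\tilde t^{(r)}_{ij},\tilde t^{(s+1)}_{kl}+a_s\tilde t^{(s)}_{kl}+b_s\tilde t^{(s-1)}_{kl}]=\tilde t^{(r)}_{kj}\tilde t^{(s)}_{il}-\tilde t^{(s)}_{kj}\tilde t^{(r)}_{il}$ for all $r,s\ge0$ and all $i,j,k,l$, with $\tilde t^{(0)}_{ij}=\delta_{ij}$, $\tilde t^{(-1)}_{ij}=0$; $\tilde T_{ij}(u)=\delta_{ij}+\sum_{r\ge1}\tilde t^{(r)}_{ij}u^{-r}$. *)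

From HB Require Import structures.
From mathcomp Require Import all_boot all_order all_algebra.
From mathcomp Require Import complex.
From mathcomp Require Import Rstruct.
Set Implicit Arguments. Unset Strict Implicit. Unset Printing Implicit Defensive.
Import Order.TTheory GRing.Theory Num.Theory.
Local Open Scope ring_scope.

Definition CC : Type := complex Rdefinitions.R.
Definition CC_fieldType : fieldType := CC.

Definition comm_r (A : pzRingType) (x y : A) : A := x * y - y * x.

(* Given the generators g r i j (meaningful only for r >= 1), the extended
   family  t^{(0)}_{ij} = delta_{ij},  t^{(r)}_{ij} = g r i j  for r >= 1. *)
Definition Tt (A : pzRingType) (n : nat) (g : nat -> 'I_n -> 'I_n -> A)
  (r : nat) (i j : 'I_n) : A :=
  if r == 0%N then (i == j)%:R else g r i j.

Definition Ttm1 (A : pzRingType) (n : nat) (g : nat -> 'I_n -> 'I_n -> A)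
  (r : nat) (i j : 'I_n) : A :=
  if r is r'.+1 then Tt g r' i j else 0.

Definition OY_relations (A : algType CC_fieldType) (n : nat)
  (a b : nat -> CC_fieldType) (g : nat -> 'I_n -> 'I_n -> A) : Prop :=
  forall (r s : nat) (i j k l : 'I_n),
    comm_r (Tt g r.+1 i j + a r *: Tt g r i j + b r *: Ttm1 g r i j) (Tt g s k l)
    - comm_r (Tt g r i j) (Tt g s.+1 k l + a s *: Tt g s k l + b s *: Ttm1 g s k l)
    = Tt g r k j * Tt g s i l - Tt g s k j * Tt g r i l.

(* Coefficient of u^{-r} in omega(u) = sum_i T_ii(u). *)
Definition omega_coef (A : pzRingType) (n : nat) (g : nat -> 'I_n -> 'I_n -> A)
  (r : nat) : A := \sum_(i < n) Tt g r i i.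

From HB Require Import structures.
From mathcomp Require Import all_boot all_order all_algebra.
From mathcomp Require Import complex Rstruct zify.
Set Implicit Arguments. Unset Strict Implicit. Unset Printing Implicit Defensive.
Import GRing.Theory.
Local Open Scope ring_scope.

(* With J the three-term recurrence operator x |-> x_(r+1) + a_r x_r + b_r x_(r-1)
   and L F = J_r F - J_s F its difference on double sequences F (r, s), the
   defining relations summed over the index patterns (i, i, k, k) and (k, i, i, k)
   give L c = d and L d = c, where c r s = [omega_r, omega_s] and
   d r s = sum_(i, k) [t^(r)_ki, t^(s)_ik]. As omega_0 = n, c also vanishes on the
   axes. Such an F with L (L F) = F is zero: if F vanishes below the antidiagonal
   p + q = N + 2, then L (L F) = F at p + q = N makes F an arithmetic progression
   along that antidiagonal; it starts and ends at 0, hence is 0 in characteristic 0. *)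

Section JacobiOperator.
Variables (R : pzRingType) (a b : nat -> R).

Definition jacobi (V : lmodType R) (x : nat -> V) (r : nat) : V :=
  x r.+1 + a r *: x r + b r *: (if r is r'.+1 then x r' else 0).

Definition jacobi_diff (V : lmodType R) (F : nat -> nat -> V) (r s : nat) : V :=
  jacobi (F ^~ s) r - jacobi (F r) s.

Variable V : lmodType R.
Implicit Types (x : nat -> V) (F G : nat -> nat -> V).

Lemma eq_jacobi_diff F G :
  (forall p q, F p q = G p q) -> forall r s, jacobi_diff F r s = jacobi_diff G r s.
Proof. by move=> eFG r s; rewrite /jacobi_diff /jacobi; case: r; case: s => *; rewrite !eFG. Qed.

Lemma jacobi_linear (W : lmodType R) (f : V -> W) :
  linear f -> forall x r, f (jacobi x r) = jacobi (f \o x) r.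
Proof.
move=> f_lin x r.
pose fL : {linear V -> W} := HB.pack f (GRing.isLinear.Build _ _ _ _ f f_lin).
rewrite -[f]/(fL : V -> W) /jacobi !linearD !linearZ.
by case: r => [|r]; rewrite ?raddf0.
Qed.

Lemma jacobi_sum (I : Type) (rs : seq I) (P : pred I) (x : I -> nat -> V) r :
  jacobi (fun p => \sum_(i <- rs | P i) x i p) r = \sum_(i <- rs | P i) jacobi (x i) r.
Proof.
rewrite /jacobi !big_split -!scaler_sumr /=.
by case: r => [|r] //; rewrite big1_eq.
Qed.

Lemma jacobi_diff_sum (I : Type) (rs : seq I) (P : pred I) (F : I -> nat -> nat -> V) r s :
  jacobi_diff (fun p q => \sum_(i <- rs | P i) F i p q) r s
  = \sum_(i <- rs | P i) jacobi_diff (F i) r s.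
Proof. by rewrite /jacobi_diff !jacobi_sum -sumrB. Qed.

Lemma jacobi_diff_leading N F :
  (forall p q, (p + q < N)%N -> F p q = 0) ->
  forall p q, (p + q < N)%N -> jacobi_diff F p q = F p.+1 q - F p q.+1.
Proof.
move=> F0 p q lt_pq_N; rewrite /jacobi_diff /jacobi (F0 p q) // !scaler0 !addr0.
case: p lt_pq_N => [|p]; case: q => [|q] lt_pq_N /=.
- by rewrite !scaler0 !addr0.
- by rewrite (F0 0%N q) ?scaler0 ?addr0 //; lia.
- by rewrite (F0 p 0%N) ?scaler0 ?addr0 //; lia.
- by rewrite (F0 p q.+1) ?(F0 p.+1 q) ?scaler0 ?addr0 //; lia.
Qed.

End JacobiOperator.

Section CharacteristicZero.
Variables (R : fieldType) (V : lmodType R) (a b : nat -> R).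
Hypothesis charR0 : [pchar R] =i pred0.

Lemma mulrSn_eq0 (x : V) m : (x *+ m.+1 == 0) = (x == 0).
Proof. by rewrite -scaler_nat scaler_eq0 ((pcharf0P R).1 charR0 m.+1). Qed.

Lemma second_diff_eq0 (x : nat -> V) k :
  (forall j, (j < k)%N -> x j.+2 = x j.+1 *+ 2 - x j) ->
  x 0%N = 0 -> x k.+1 = 0 -> forall j, (j <= k.+1)%N -> x j = 0.
Proof.
move=> x_rec x0 xk1.
have arith : forall j, (j <= k)%N -> x j = x 1%N *+ j /\ x j.+1 = x 1%N *+ j.+1.
  elim=> [|j IHj] le_jk; first by rewrite x0 mulr1n.
  have [xj xj1] := IHj (ltnW le_jk); split=> //.
  by rewrite x_rec // xj xj1 -mulrnA -mulrnBr; [congr (_ *+ _); lia | lia].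
have x1 : x 1%N = 0 by apply/eqP; rewrite -(mulrSn_eq0 _ k) -(arith k (leqnn k)).2 xk1.
by case=> [|j] le_jk //; rewrite (arith j le_jk).2 x1 mul0rn.
Qed.

Variable F : nat -> nat -> V.
Hypotheses (F0q : forall q, F 0%N q = 0) (Fp0 : forall p, F p 0%N = 0).
Hypothesis F_fixed : forall p q, jacobi_diff a b (jacobi_diff a b F) p q = F p q.

Lemma jacobi_diff2_antidiagonal M :
  (forall p q, (p + q < M.+2)%N -> F p q = 0) ->
  forall j, (j <= M.+2)%N -> F j (M.+2 - j) = 0.
Proof.
move=> F_low.
have LF_low p q : (p + q < M.+1)%N -> jacobi_diff a b F p q = 0.
  by move=> lt_pq; rewrite (jacobi_diff_leading _ _ F_low) ?F_low ?subrr //; lia.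
apply: second_diff_eq0 => [j lt_jM||] /=; rewrite ?F0q ?subnn ?Fp0 //.
have e0 : (M.+2 - j.+2 = M - j)%N by lia.
have e1 : (M.+2 - j.+1 = (M - j).+1)%N by lia.
have e2 : (M.+2 - j = (M - j).+2)%N by lia.
rewrite e0 e1 e2.
have := F_fixed j (M - j)%N.
rewrite (jacobi_diff_leading _ _ LF_low); last by lia.
rewrite !(jacobi_diff_leading _ _ F_low); try lia.
rewrite (F_low j (M - j)%N); last by lia.
by move/eqP; rewrite subr_eq0 subr_eq => /eqP ->; rewrite mulr2n addrAC.
Qed.

Lemma jacobi_diff2_fixed_eq0 p q : F p q = 0.
Proof.
suff F_low N : forall p q, (p + q < N)%N -> F p q = 0 by apply: (F_low (p + q).+1).
elim: N => [//|N IH] {}p {}q; rewrite ltnS leq_eqVlt => /orP[/eqP pqN|]; last exact: IH.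
case: p pqN => [|p] pqN; first exact: F0q.
case: q pqN => [|q] pqN; first exact: Fp0.
have F_low p' q' : (p' + q' < (p + q).+2)%N -> F p' q' = 0 by move=> ?; apply: IH; lia.
have le_p : (p.+1 <= (p + q).+2)%N by lia.
have := jacobi_diff2_antidiagonal F_low le_p.
by have -> : ((p + q).+2 - p.+1 = q.+1)%N by lia.
Qed.

End CharacteristicZero.

Lemma sumr2B (V : zmodType) (I J : Type) (rs : seq I) (ts : seq J) (f h : I -> J -> V) :
  \sum_(i <- rs) \sum_(j <- ts) (f i j - h i j)
  = \sum_(i <- rs) \sum_(j <- ts) f i j - \sum_(i <- rs) \sum_(j <- ts) h i j.
Proof. by rewrite -sumrB; apply: eq_bigr => i _; rewrite sumrB. Qed.

Section Commutator.
Variables (R : pzRingType) (A : algType R).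

Lemma comm_r_suml (I : Type) (rs : seq I) (P : pred I) (x : I -> A) (y : A) :
  comm_r (\sum_(i <- rs | P i) x i) y = \sum_(i <- rs | P i) comm_r (x i) y.
Proof. by rewrite /comm_r mulr_suml mulr_sumr -sumrB. Qed.

Lemma comm_r_sumr (I : Type) (rs : seq I) (P : pred I) (x : A) (y : I -> A) :
  comm_r x (\sum_(i <- rs | P i) y i) = \sum_(i <- rs | P i) comm_r x (y i).
Proof. by rewrite /comm_r mulr_suml mulr_sumr -sumrB. Qed.

Lemma comm_r_sum2 (I J : Type) (rs : seq I) (ts : seq J) (x : I -> A) (y : J -> A) :
  comm_r (\sum_(i <- rs) x i) (\sum_(j <- ts) y j)
  = \sum_(i <- rs) \sum_(j <- ts) comm_r (x i) (y j).
Proof. by rewrite comm_r_suml; apply: eq_bigr => i _; rewrite comm_r_sumr. Qed.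

Lemma comm_r_linear_l (y : A) : linear (fun x : A => comm_r x y).
Proof. by move=> c u v; rewrite /comm_r mulrDl mulrDr -scalerAl -scalerAr scalerBr opprD addrACA. Qed.

Lemma comm_r_linear_r (x : A) : linear (comm_r x).
Proof. by move=> c u v; rewrite /comm_r mulrDl mulrDr -scalerAl -scalerAr scalerBr opprD addrACA. Qed.

Lemma jacobi_diff_comm_r (a b : nat -> R) (x y : nat -> A) r s :
  jacobi_diff a b (fun p q => comm_r (x p) (y q)) r s
  = comm_r (jacobi a b x r) (y s) - comm_r (x r) (jacobi a b y s).
Proof.
by rewrite /jacobi_diff (jacobi_linear _ _ (comm_r_linear_l _)) (jacobi_linear _ _ (comm_r_linear_r _)).
Qed.

End Commutator.

Lemma pchar_CC : [pchar CC_fieldType] =i pred0.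
Proof. exact: (@Num.Theory.pchar_num CC). Qed.

Section OmegaCommutators.
Variables (n : nat) (a b : nat -> CC_fieldType) (A : algType CC_fieldType).
Variable g : nat -> 'I_n -> 'I_n -> A.
Hypothesis gOY : OY_relations a b g.

Lemma OY_relations_jacobi r s i j k l :
  comm_r (jacobi a b (fun p => Tt g p i j) r) (Tt g s k l)
    - comm_r (Tt g r i j) (jacobi a b (fun q => Tt g q k l) s)
  = Tt g r k j * Tt g s i l - Tt g s k j * Tt g r i l.
Proof. exact: gOY. Qed.

Definition cross_comm (r s : nat) : A :=
  \sum_(i < n) \sum_(k < n) comm_r (Tt g r k i) (Tt g s i k).

Lemma omega_coef0 : omega_coef g 0 = n%:R.
Proof. by rewrite /omega_coef /Tt; under eq_bigr do rewrite eqxx; rewrite sumr_const card_ord. Qed.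

Lemma jacobi_diff_omega_comm r s :
  jacobi_diff a b (fun p q => comm_r (omega_coef g p) (omega_coef g q)) r s = cross_comm r s.
Proof.
rewrite jacobi_diff_comm_r /omega_coef !jacobi_sum !comm_r_sum2 -sumr2B.
under eq_bigr do under eq_bigr do rewrite OY_relations_jacobi.
by rewrite /cross_comm /comm_r !sumr2B; congr (_ - _); apply: exchange_big.
Qed.

Lemma jacobi_diff_cross_comm r s :
  jacobi_diff a b cross_comm r s = comm_r (omega_coef g r) (omega_coef g s).
Proof.
rewrite /cross_comm jacobi_diff_sum.
under eq_bigr do rewrite jacobi_diff_sum.
under eq_bigr do under eq_bigr do rewrite jacobi_diff_comm_r OY_relations_jacobi.
rewrite /comm_r /omega_coef mulr_suml mulr_suml -sumrB.
by apply: eq_bigr => i _; rewrite mulr_sumr mulr_sumr -sumrB.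
Qed.

Lemma omega_coef_comm r s : comm_r (omega_coef g r) (omega_coef g s) = 0.
Proof.
have comm_omega0 p : comm_r (omega_coef g 0) (omega_coef g p) = 0
                     /\ comm_r (omega_coef g p) (omega_coef g 0) = 0.
  by rewrite omega_coef0 /comm_r mulr_natl mulr_natr subrr.
apply: (@jacobi_diff2_fixed_eq0 _ A a b pchar_CC
          (fun p q => comm_r (omega_coef g p) (omega_coef g q))) => {r s} [q|p|p q].
- exact: (comm_omega0 q).1.
- exact: (comm_omega0 p).2.
- rewrite (eq_jacobi_diff _ _ jacobi_diff_omega_comm).
  exact: (jacobi_diff_cross_comm p q).
Qed.

End OmegaCommutators.

Theorem mainTheorem3 (n : nat) (a b : nat -> CC_fieldType) :
  (1 <= n)%N -> b 0%N = 0 -> (forall m, (1 <= m)%N -> b m != 0) ->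
  forall (A : algType CC_fieldType) (g : nat -> 'I_n -> 'I_n -> A),
    OY_relations a b g ->
    forall r s : nat, omega_coef g r * omega_coef g s = omega_coef g s * omega_coef g r.
Proof.
move=> _ _ _ A g gOY r s; apply/eqP; rewrite -subr_eq0; apply/eqP.
exact: (omega_coef_comm gOY).
Qed.
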